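(* Consider an MPI computation in which every call by an MPI rank to a collective communication function is replaced by the two-phase wrapper (Phase 1: a call to MPI\_Barrier() on the same ranks, the ''trivial barrier''; Phase 2: the original collective communication call), and in which checkpointing is governed by the two-phase checkpoint protocol described in the context. Then an MPI rank is never inside a collective communication call (Phase 2 of the wrapper) when a do-ckpt (checkpoint) message is received from the checkpoint coordinator.
   Context: Setting: a set of MPI ranks (processes) running concurrently, plus a separate checkpoint coordinator process that exchanges messages with each rank (each rank has a helper thread that receives and answers coordinator messages asynchronously). Events are ordered by Lamport's happens-before relation. Barrier axiom: for a given invocation of an MPI barrier, it never happens that a rank A exits the barrier before (under happens-before) another participating rank B enters that barrier. Two-phase wrapper: whenever the application invokes an MPI collective communication function, it instead executes a wrapper which first calls MPI\_Barrier() over the participating ranks (the ''trivial barrier'', Phase 1) and then calls the original collective communication function (Phase 2). A rank is ''inCollectiveWrapper'' while executing this wrapper. Checkpoint protocol. Messages: intend-to-ckpt, extra-iteration, do-ckpt. Rank states reported: ready, in-phase-1, exit-phase-2. Coordinator: send intend-to-ckpt to all ranks and receive a response from each rank; while some rank responded with state exit-phase-2, send extra-iteration to all ranks and receive a response from each rank; then send do-ckpt to all ranks. Rank, on receiving intend-to-ckpt or extra-iteration: if not in a collective wrapper, reply ''ready''; if in a collective wrapper and in Phase 1, reply ''in-phase-1''; if in a collective wrapper and in Phase 2, first finish executing the collective communication call, then reply ''exit-phase-2'' and set its state to ready. In all cases the rank then continues executing but waits (blocks) before its next collective communication call (i.e., before entering Phase 2 of any wrapper). Rank, on receiving do-ckpt: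 perform its local checkpoint; then, if it is waiting before a collective communication call, unblock and continue executing. *)

From mathcomp Require Import all_boot.
Set Implicit Arguments. Unset Strict Implicit. Unset Printing Implicit Defensive.

Inductive cmsg := IntendCkpt | ExtraIteration | DoCkpt.
(* Rank states reported in replies rank -> coordinator. *)
Inductive rstate := Ready | InPhase1 | ExitPhase2.

(* Position of a rank w.r.t. the two-phase collective wrapper.
   [Phase1 false]: inside the trivial barrier (entered, not yet exited);
   [Phase1 true]: barrier exited, Phase 2 (the collective) not yet called;
   [Phase2]: inside the original collective communication call. *)
Inductive wphase := Outside | Phase1 of bool | Phase2.

Record rank_st := RankSt {
  pc : nat;          (* index of the current/next collective invocation *)
  ph : wphase;
  blocked : bool;    (* must wait before its next collective call (Phase 2) *)
  pending : bool     (* received intend/extra while in Phase 2: reply owed *)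
}.

Record sys (R : finType) := Sys {
  rk : R -> rank_st;
  inbox : R -> seq cmsg;
  outbox : R -> seq rstate;
  collecting : bool;          (* coordinator is in a round, awaiting replies *)
  resp : R -> option rstate
}.

Definition upd (R : finType) (A : Type) (f : R -> A) (r : R) (x : A) : R -> A :=
  fun r' => if r' == r then x else f r'.

Inductive label (R : finType) :=
| LEnter of R
| LBarrierExit of R
| LEnterP2 of R
| LExitP2 of R
| LRecv of R & cmsg
| LStartCkpt
| LCollect of R
| LDecide.
Arguments LStartCkpt {R}.
Arguments LDecide {R}.

Section Model.
Variables (R : finType) (Coll : Type).
(* prog r k : the k-th collective invocation executed by rank r;
   part c  : the ranks participating in invocation c. *)
Variables (prog : R -> nat -> Coll) (part : Coll -> {set R}).

Definition entered (s : sys R) (r' : R) (c : Coll) : Prop :=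
  exists k, prog r' k = c /\
    (k < pc (rk s r') \/ (k = pc (rk s r') /\ ph (rk s r') <> Outside)).

Definition set_rank (s : sys R) (r : R) (x : rank_st) : sys R :=
  Sys (upd (rk s) r x) (inbox s) (outbox s) (collecting s) (resp s).

Definition reply (s : sys R) (r : R) (x : rank_st) (a : rstate) (rest : seq cmsg)
  : sys R :=
  Sys (upd (rk s) r x) (upd (inbox s) r rest)
      (upd (outbox s) r (rcons (outbox s r) a)) (collecting s) (resp s).

Definition bcast (s : sys R) (m : cmsg) : R -> seq cmsg :=
  fun r => rcons (inbox s r) m.

Inductive step : sys R -> label R -> sys R -> Prop :=
| StEnter s r :
    ph (rk s r) = Outside ->
    step s (LEnter r)
      (set_rank s r (RankSt (pc (rk s r)) (Phase1 false) (blocked (rk s r)) (pending (rk s r))))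
| StBarrierExit s r :
    ph (rk s r) = Phase1 false ->
    (forall r', r' \in part (prog r (pc (rk s r))) -> entered s r' (prog r (pc (rk s r)))) ->
    step s (LBarrierExit r)
      (set_rank s r (RankSt (pc (rk s r)) (Phase1 true) (blocked (rk s r)) (pending (rk s r))))
| StEnterP2 s r :
    ph (rk s r) = Phase1 true ->
    blocked (rk s r) = false ->
    step s (LEnterP2 r)
      (set_rank s r (RankSt (pc (rk s r)) Phase2 (blocked (rk s r)) (pending (rk s r))))
| StExitP2 s r :
    ph (rk s r) = Phase2 ->
    pending (rk s r) = false ->
    step s (LExitP2 r)
      (set_rank s r (RankSt (pc (rk s r)).+1 Outside (blocked (rk s r)) false))
| StExitP2Reply s r :
    ph (rk s r) = Phase2 ->
    pending (rk s r) = true ->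
    step s (LExitP2 r)
      (Sys (upd (rk s) r (RankSt (pc (rk s r)).+1 Outside true false))
           (inbox s) (upd (outbox s) r (rcons (outbox s r) ExitPhase2))
           (collecting s) (resp s))
| StRecvQueryOut s r m rest :
    inbox s r = m :: rest -> m <> DoCkpt ->
    ph (rk s r) = Outside ->
    step s (LRecv r m)
      (reply s r (RankSt (pc (rk s r)) Outside true (pending (rk s r))) Ready rest)
| StRecvQueryP1 s r m rest b :
    inbox s r = m :: rest -> m <> DoCkpt ->
    ph (rk s r) = Phase1 b ->
    step s (LRecv r m)
      (reply s r (RankSt (pc (rk s r)) (Phase1 b) true (pending (rk s r))) InPhase1 rest)
| StRecvQueryP2 s r m rest :
    inbox s r = m :: rest -> m <> DoCkpt ->
    ph (rk s r) = Phase2 ->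
    step s (LRecv r m)
      (Sys (upd (rk s) r (RankSt (pc (rk s r)) Phase2 (blocked (rk s r)) true))
           (upd (inbox s) r rest) (outbox s) (collecting s) (resp s))
| StRecvDo s r rest :
    inbox s r = DoCkpt :: rest ->
    (* local checkpoint, then unblock *)
    step s (LRecv r DoCkpt)
      (Sys (upd (rk s) r (RankSt (pc (rk s r)) (ph (rk s r)) false (pending (rk s r))))
           (upd (inbox s) r rest) (outbox s) (collecting s) (resp s))
| StStart s :
    collecting s = false ->
    step s LStartCkpt
      (Sys (rk s) (bcast s IntendCkpt) (outbox s) true (fun _ => None))
| StCollect s r a rest :
    collecting s = true -> outbox s r = a :: rest -> resp s r = None ->
    step s (LCollect r)
      (Sys (rk s) (inbox s) (upd (outbox s) r rest) true (upd (resp s) r (Some a)))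
| StDecideExtra s :
    collecting s = true -> (forall r, resp s r <> None) ->
    (exists r, resp s r = Some ExitPhase2) ->
    step s LDecide
      (Sys (rk s) (bcast s ExtraIteration) (outbox s) true (fun _ => None))
| StDecideDo s :
    collecting s = true -> (forall r, resp s r <> None) ->
    (forall r, resp s r <> Some ExitPhase2) ->
    step s LDecide
      (Sys (rk s) (bcast s DoCkpt) (outbox s) false (fun _ => None)).

Definition init : sys R :=
  Sys (fun _ => RankSt 0 Outside false false) (fun _ => [::]) (fun _ => [::])
      false (fun _ => None).

Inductive reachable : sys R -> Prop :=
| ReachInit : reachable init
| ReachStep s l s' : reachable s -> step s l s' -> reachable s'.

End Model.

From mathcomp Require Import all_boot.

(* Every reply a rank sends to the coordinator (ready, in-phase-1 or
   exit-phase-2) leaves it blocked before its next Phase 2, and only do-ckpt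
   unblocks it.  Do-ckpt is broadcast only once every rank has answered the
   current round, so every rank is blocked when do-ckpt reaches it.  A blocked
   rank is never in Phase 2: it cannot enter Phase 2 while blocked, and it only
   becomes blocked outside Phase 2, because a query arriving during Phase 2 is
   answered after the collective returns.  In particular the property does not
   depend on the coordinator's extra-iteration rounds. *)

Set Implicit Arguments.

Section TwoPhaseCheckpoint.
Variables (R : finType) (Coll : Type) (prog : R -> nat -> Coll)
  (part : Coll -> {set R}).

Definition phase2_unblocked (s : sys R) (r : R) : Prop :=
  ph (rk s r) = Phase2 -> blocked (rk s r) = false.

Lemma phase2_unblocked_step s l s' r :
  phase2_unblocked s r -> step prog part s l s' -> phase2_unblocked s' r.
Proof.
rewrite /phase2_unblocked => inv st.
case: st inv => [s0 r0 _ | s0 r0 _ _ | s0 r0 _ unblocked | s0 r0 _ _ | s0 r0 _ _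
  | s0 r0 m rest _ _ _ | s0 r0 m rest b _ _ _ | s0 r0 m rest _ _ in_phase2
  | s0 r0 rest _ | s0 _ | s0 r0 a rest _ _ _ | s0 _ _ _ | s0 _ _ _] //= inv;
  rewrite /upd; case: eqP => // ?; subst.
by move=> _; apply: inv.
Qed.

(* The position of one rank in the coordinator's current round, read off its
   state, its two channels and the reply the coordinator has recorded for it;
   the first argument is [collecting]. *)
Inductive channel_inv : bool -> rank_st -> seq cmsg -> seq rstate ->
    option rstate -> Prop :=
| ChIdle x a :
    pending x = false -> channel_inv false x [::] [::] a
| ChIdleDo x a :
    pending x = false -> blocked x = true ->
    channel_inv false x [:: DoCkpt] [::] a
| ChQueried x q :
    q <> DoCkpt -> pending x = false -> channel_inv true x [:: q] [::] None
| ChQueriedDo x q :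
    q <> DoCkpt -> pending x = false -> blocked x = true ->
    channel_inv true x [:: DoCkpt; q] [::] None
| ChDeferred x :
    pending x = true -> channel_inv true x [::] [::] None
| ChReplied x a :
    pending x = false -> blocked x = true ->
    channel_inv true x [::] [:: a] None
| ChCollected x a :
    pending x = false -> blocked x = true ->
    channel_inv true x [::] [::] (Some a).

Definition channel_inv_at (s : sys R) (r : R) : Prop :=
  channel_inv (collecting s) (rk s r) (inbox s r) (outbox s r) (resp s r).

Lemma channel_inv_DoCkpt_blocked c x rest o a :
  channel_inv c x (DoCkpt :: rest) o a -> blocked x = true.
Proof.
move E: (DoCkpt :: rest) => i inv.
by case: inv E => // x' q q_query _ [/esym/q_query].
Qed.

Lemma channel_inv_move c x n w p i o a :
  channel_inv c x i o a -> p = pending x ->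
  channel_inv c (RankSt n w (blocked x) p) i o a.
Proof. by move=> inv ->; case: inv => *; constructor. Qed.

Lemma channel_inv_query c x m rest o a :
  channel_inv c x (m :: rest) o a -> m <> DoCkpt ->
  [/\ c = true, rest = [::], o = [::], a = None & pending x = false].
Proof.
move E: (m :: rest) => i inv; case: inv E => // x' q.
- by move=> _ _ [-> _].
- by move=> _ ? [_ ->].
- by move=> _ _ _ [-> _].
Qed.

Lemma channel_inv_pop_DoCkpt c x y rest o a :
  channel_inv c x (DoCkpt :: rest) o a -> pending y = pending x ->
  channel_inv c y rest o a.
Proof.
move E: (DoCkpt :: rest) => i inv; case: inv E => // x' ?.
- by move=> p _ [->] eq_p; constructor; rewrite eq_p.
- by move=> q_query _ [/esym/q_query].
- by move=> q_query p _ [->] eq_p; constructor; rewrite ?eq_p.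
Qed.

Lemma channel_inv_deferred_reply c x y i o a :
  channel_inv c x i o a -> pending x = true ->
  pending y = false -> blocked y = true ->
  channel_inv c y i (rcons o ExitPhase2) a.
Proof. by case=> *; first [congruence | constructor]. Qed.

Lemma channel_inv_collect c x i a rest :
  channel_inv c x i (a :: rest) None -> channel_inv true x i rest (Some a).
Proof.
move E: (a :: rest) => o inv; case: inv E => //.
by move=> ? ? p b [_ ->]; constructor.
Qed.

Lemma channel_inv_answered c x i o a :
  channel_inv c x i o a -> c = true -> a <> None ->
  [/\ i = [::], o = [::], pending x = false & blocked x = true].
Proof. by case. Qed.

Lemma channel_inv_start c x i o a q :
  channel_inv c x i o a -> c = false -> q <> DoCkpt ->
  channel_inv true x (rcons i q) o None.
Proof. by case=> //= *; constructor. Qed.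

Lemma channel_inv_step s l s' r :
  channel_inv_at s r -> step prog part s l s' -> channel_inv_at s' r.
Proof.
rewrite /channel_inv_at => inv st.
case: st inv => [s0 r0 _ | s0 r0 _ _ | s0 r0 _ _ | s0 r0 _ not_pending
  | s0 r0 _ is_pending | s0 r0 m rest hd query _ | s0 r0 m rest b hd query _
  | s0 r0 m rest hd query _ | s0 r0 rest hd | s0 idle | s0 r0 a rest busy hd unanswered
  | s0 busy answered _ | s0 busy answered _] /= inv;
  rewrite /upd; try (case: eqP => [? | _ //=]; subst r0).
1-3: exact: channel_inv_move inv _.
- exact: channel_inv_move inv (esym not_pending).
- by apply: channel_inv_deferred_reply inv is_pending _ _.
- rewrite hd in inv; have [-> -> -> -> p] := channel_inv_query inv query.
  exact: ChReplied.
- rewrite hd in inv; have [-> -> -> -> p] := channel_inv_query inv query.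
  exact: ChReplied.
- rewrite hd in inv; have [-> -> -> -> _] := channel_inv_query inv query.
  exact: ChDeferred.
- by rewrite hd in inv; apply: channel_inv_pop_DoCkpt inv _.
- by apply: channel_inv_start inv idle _.
- rewrite busy in inv; case: eqP => [? | _ //=]; subst r0.
  by rewrite hd unanswered in inv; exact: channel_inv_collect inv.
- have [i0 -> p b] := channel_inv_answered inv busy (answered r).
  by rewrite /bcast i0; apply: ChQueried.
- have [i0 -> p b] := channel_inv_answered inv busy (answered r).
  by rewrite /bcast i0; apply: ChIdleDo.
Qed.

Lemma reachable_phase2_unblocked s r :
  reachable prog part s -> phase2_unblocked s r.
Proof.
by elim=> // s0 l s1 _ inv st; apply: phase2_unblocked_step inv st.
Qed.

Lemma reachable_channel_inv s r : reachable prog part s -> channel_inv_at s r.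
Proof.
elim=> [|s0 l s1 _ inv st]; first exact: ChIdle.
exact: channel_inv_step inv st.
Qed.

Lemma step_recv_DoCkpt s s' r :
  step prog part s (LRecv r DoCkpt) s' -> exists rest, inbox s r = DoCkpt :: rest.
Proof.
move E: (LRecv r DoCkpt) => l st.
case: st E => // [s0 r0 m rest _ query _ | s0 r0 m rest b _ query _
  | s0 r0 m rest _ query _ | s0 r0 rest hd].
1-3: by case=> _ /esym/query.
by case=> ->; exists rest.
Qed.

End TwoPhaseCheckpoint.

Theorem theorem1 (R : finType) (Coll : Type) (prog : R -> nat -> Coll)
    (part : Coll -> {set R}) (s s' : sys R) (r : R) :
  reachable prog part s ->
  step prog part s (LRecv r DoCkpt) s' ->
  ph (rk s r) <> Phase2.
Proof.
move=> reach /step_recv_DoCkpt [rest hd] in_phase2.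
have := reachable_channel_inv r reach.
rewrite /channel_inv_at hd => /channel_inv_DoCkpt_blocked.
by rewrite (reachable_phase2_unblocked r reach in_phase2).
Qed.
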